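(* Let $\beta>0$ and let $E'=\{h_1,\dots,h_L\}\subset\mathbb R$ with $2\le L<\infty$. For $m\in[-1,1]$ define $\hat B(m)\in\mathbb R^L$ by $$\hat B(m)_i=\log\frac{\cosh(\beta m+h_i)}{\cosh h_i}-\frac1L\sum_{j=1}^L\log\frac{\cosh(\beta m+h_j)}{\cosh h_j},\qquad i=1,\dots,L.$$ Then the map $m\mapsto\hat B(m)$ is injective.
   Context: This is the stability vector $\hat B_{\nu_m}$ of the mean-field random-field Ising model with $F(\nu)=-\beta(\nu(+)^2+\nu(-)^2)$, local measures $\alpha[h](\sigma)=e^{h\sigma}/(2\cosh h)$ for $\sigma\in\{-1,+1\}$, evaluated at the measure $\nu_m$ on $\{-1,+1\}$ with mean $m$. *)

From mathcomp Require Import all_boot all_order all_algebra.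
From mathcomp Require Import all_classical all_reals all_analysis.
Set Implicit Arguments. Unset Strict Implicit. Unset Printing Implicit Defensive.
Import Order.TTheory GRing.Theory Num.Theory.
Local Open Scope ring_scope.

Definition cosh {R : realType} (x : R) : R := (expR x + expR (- x)) / 2.

Definition logratio {R : realType} (beta m h : R) : R :=
  ln (cosh (beta * m + h) / cosh h).

Definition Bhat {R : realType} (L : nat) (beta : R) (h : 'I_L -> R) (m : R)
  : 'rV[R]_L :=
  \row_(i < L) (logratio beta m (h i)
                 - L%:R^-1 * \sum_(j < L) logratio beta m (h j)).

(* Comparing two coordinates i, j of B(m1) = B(m2) gives, with a = beta m1,
   b = beta m2, x = h_i, y = h_j,
     cosh (a + x) cosh (b + y) = cosh (b + x) cosh (a + y).
   The difference of the two sides is sinh (a - b) sinh (x - y), so either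
   a = b or x = y. *)

From mathcomp Require Import all_boot all_order all_algebra.
From mathcomp Require Import all_classical all_reals all_analysis.
From mathcomp Require Import ring lra.
Set Implicit Arguments. Unset Strict Implicit. Unset Printing Implicit Defensive.
Import Order.TTheory GRing.Theory Num.Theory.
Local Open Scope ring_scope.

(* With A = e^a, X = e^x, ..., the identity [factor] below is
   cosh (a + x) cosh (b + y) - cosh (b + x) cosh (a + y) = sinh (a - b) sinh (x - y)
   cleared of denominators. *)
Lemma addf_inv_cross_eq (R : realFieldType) (A B X Y : R) :
  0 < A -> 0 < B -> 0 < X -> 0 < Y ->
  (A * X + (A * X)^-1) * (B * Y + (B * Y)^-1) =
    (B * X + (B * X)^-1) * (A * Y + (A * Y)^-1) ->
  A = B \/ X = Y.
Proof.
move=> A_gt0 B_gt0 X_gt0 Y_gt0 E.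
have factor : (A ^+ 2 - B ^+ 2) * (X ^+ 2 - Y ^+ 2) =
    A * B * X * Y * ((A * X + (A * X)^-1) * (B * Y + (B * Y)^-1)
                     - (B * X + (B * X)^-1) * (A * Y + (A * Y)^-1)).
  by field; rewrite !gt_eqF.
move: factor; rewrite E subrr mulr0 => /eqP; rewrite mulf_eq0 !subr_eq0.
by rewrite !eqrXn2 ?ltW // => /orP[/eqP|/eqP]; [left|right].
Qed.

Lemma cosh_gt0 (R : realType) (x : R) : 0 < cosh x.
Proof. by rewrite /cosh divr_gt0 // addr_gt0 // expR_gt0. Qed.

Lemma cosh_cross_eq (R : realType) (a b x y : R) :
  cosh (a + x) * cosh (b + y) = cosh (b + x) * cosh (a + y) -> a = b \/ x = y.
Proof.
have coshE (u v : R) : cosh (u + v) = (expR u * expR v + (expR u * expR v)^-1) / 2.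
  by rewrite /cosh expRN expRD.
have quarter_neq0 : 2^-1 / 2 != 0 :> R by rewrite mulf_neq0 ?invr_eq0.
rewrite !coshE mulrACA [RHS]mulrACA => /(mulIf quarter_neq0).
by case/addf_inv_cross_eq; rewrite ?expR_gt0 // => /expR_inj; [left|right].
Qed.

Lemma logratio_sub_cross (R : realType) (beta m1 m2 u v : R) :
  logratio beta m1 u - logratio beta m2 u =
    logratio beta m1 v - logratio beta m2 v ->
  cosh (beta * m1 + u) * cosh (beta * m2 + v) =
    cosh (beta * m2 + u) * cosh (beta * m1 + v).
Proof.
have coshP (z : R) : cosh z \in Num.pos by rewrite posrE cosh_gt0.
rewrite /logratio !(ln_div (coshP _) (coshP _)) => E.
have ln_coshM (a b : R) : ln (cosh a * cosh b) = ln (cosh a) + ln (cosh b).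
  exact: lnM.
apply: ln_inj; [exact: rpredM (coshP _) (coshP _)..|].
by rewrite !ln_coshM; lra.
Qed.

Lemma Bhat_eq_logratio_sub (R : realType) (L : nat) (beta : R) (h : 'I_L -> R)
    (m1 m2 : R) :
  Bhat beta h m1 = Bhat beta h m2 ->
  forall i j, logratio beta m1 (h i) - logratio beta m2 (h i) =
              logratio beta m1 (h j) - logratio beta m2 (h j).
Proof.
move=> E i j.
have := congr1 (fun M : 'rV_L => M 0 i) E.
have := congr1 (fun M : 'rV_L => M 0 j) E.
rewrite !mxE; lra.
Qed.

Theorem mainTheorem5 (R : realType) (beta : R) (L : nat) (h : 'I_L -> R) :
  0 < beta -> (2 <= L)%N -> injective h ->
  forall m1 m2 : R, -1 <= m1 <= 1 -> -1 <= m2 <= 1 ->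
  Bhat beta h m1 = Bhat beta h m2 -> m1 = m2.
Proof.
move=> beta_gt0 L_ge2 h_inj m1 m2 _ _ E.
pose i0 : 'I_L := Ordinal (ltnW L_ge2).
pose i1 : 'I_L := Ordinal L_ge2.
have h01 : h i0 <> h i1 by move=> /h_inj /(congr1 val).
have := logratio_sub_cross (Bhat_eq_logratio_sub E i0 i1).
case/cosh_cross_eq => [|/h01 //].
exact: (mulfI (lt0r_neq0 beta_gt0)).
Qed.
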